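(* Let $\bar r\in(0,1)$ be a local minimum point of $F$. Then $$\lim_{r\to\bar r^-}\partial_rG(r,\bar r)=-\lim_{r\to\bar r^+}\partial_rG(r,\bar r)=\frac12.$$
   Context: Let $n\ge2$, $|\partial B_1|$ the $(n-1)$-dimensional measure of the unit sphere in $\mathbb{R}^n$, and $V\ge0$, $V\not\equiv0$, a smooth function on $[0,1]$ (the profile of a smooth radial potential on the unit ball). For $s\in(0,1)$, $G(\cdot,s)$ is the Green function of $\mathcal{L}u=-u''-\frac{n-1}{r}u'+V(r)u$ on $(0,1)$ with $u'(0)=0$ and $u'(1)=0$: that is, $-\partial_r^2G(r,s)-\frac{n-1}{r}\partial_rG(r,s)+V(r)G(r,s)=\delta_s$ in distributions on $(0,1)$ (Dirac mass w.r.t. $dr$), $\partial_rG(0,s)=\partial_rG(1,s)=0$. $F(r)=|\partial B_1|\,r^{n-1}/G(r,r)$ for $r\in(0,1)$. *)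

From Stdlib Require Import Reals.
From Coquelicot Require Import Coquelicot.
Open Scope R_scope.

(* |∂B_1| in R^n = 2 π^{n/2} / Γ(n/2), via the recursion
   A(1) = 2, A(2) = 2π, A(m+2) = (2π/m) A(m). (A(0) is unused.) *)
Fixpoint sphere_area (n : nat) : R :=
  match n with
  | O => 0
  | S O => 2
  | S (S O) => 2 * PI
  | S (S m) => 2 * PI / INR m * sphere_area m
  end.

(* Smooth profile on [0,1]: a function R -> R having derivatives of all orders
   everywhere (every smooth function on [0,1] extends to such a function). *)
Definition smooth (V : R -> R) : Prop := forall (k : nat) (x : R), ex_derive_n V k x.

(* G(.,s) is the Green function of  L u = -u'' - (n-1)/r u' + V u  on (0,1)
   with u'(0) = u'(1) = 0, i.e. (classical form of -L G(.,s) = δ_s in D'(0,1)):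
   G(.,s) is continuous on (0,1), twice differentiable and solves L G = 0
   on (0,1) \ {s}, ∂_r G(.,s) → 0 at r = 0+ and r = 1-, and the derivative
   has one-sided limits at s with jump  ∂_rG(s-,s) - ∂_rG(s+,s) = 1. *)
Definition is_green_function (n : nat) (V : R -> R) (G : R -> R -> R) : Prop :=
  forall s, 0 < s < 1 ->
    let g := fun r => G r s in
    (forall r, 0 < r < 1 -> continuous g r) /\
    (forall r, 0 < r < 1 -> r <> s ->
       ex_derive g r /\ ex_derive_n g 2 r /\
       - Derive_n g 2 r - (INR n - 1) / r * Derive g r + V r * g r = 0) /\
    filterlim (Derive g) (at_right 0) (locally 0) /\
    filterlim (Derive g) (at_left 1) (locally 0) /\
    (exists a b : R,
       filterlim (Derive g) (at_left s) (locally a) /\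
       filterlim (Derive g) (at_right s) (locally b) /\
       a - b = 1).

Definition F_of (n : nat) (G : R -> R -> R) (r : R) : R :=
  sphere_area n * r ^ (n - 1) / G r r.

Definition local_min_on_01 (f : R -> R) (x : R) : Prop :=
  0 < x < 1 /\
  exists delta : R, 0 < delta /\
    forall r, 0 < r < 1 -> Rabs (r - x) < delta -> f x <= f r.

(* Write n = m + 1.  For poles t1 < t2 the Wronskian
   r^m (G(r,t1) ∂_r G(r,t2) - ∂_r G(r,t1) G(r,t2)) is constant on (t1,t2), vanishes
   near 0 and 1 by the Neumann conditions, and jumps at each pole by the value of the
   other Green function there; this gives the symmetry t1^m G(t1,t2) = t2^m G(t2,t1)
   and, at s in (t1,t2), the identity G(s,s) C = s^m G(s,t2) G(s,t1) with
   C = t2^m G(t2,t1) > 0.  Hence F = const / (G(.,t2) G(.,t1)) near rbar, so rbar is a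
   critical point of the product.  If a, b are the one-sided limits of ∂_r G(.,s) at
   s, then G(s,s) ∂_r G(s,t) equals a G(s,t) for t > s and b G(s,t) for t < s, so
   criticality reads (a + b) G(rbar,t2) G(rbar,t1) = 0; with a - b = 1 this forces
   a = 1/2, b = -1/2.  Positivity of G on the diagonal, needed to divide, follows from
   the monotonicity of the energy r^m G ∂_r G, whose derivative is
   r^m ((∂_r G)^2 + V G^2) >= 0. *)

From Stdlib Require Import Reals Lra Lia.
From Coquelicot Require Import Coquelicot.
Open Scope R_scope.

Section FilterLimits.
Context {T : Type} {F : (T -> Prop) -> Prop} {FF : Filter F}.

Lemma filterlim_Rmult (f g : T -> R) a b :
  filterlim f F (locally a) -> filterlim g F (locally b) ->
  filterlim (fun x => f x * g x) F (locally (a * b)).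
Proof.
  intros Hf Hg; apply (filterlim_comp_2 f g Rmult Hf Hg).
  exact (@filterlim_mult R_AbsRing a b).
Qed.

Lemma filterlim_Rminus (f g : T -> R) a b :
  filterlim f F (locally a) -> filterlim g F (locally b) ->
  filterlim (fun x => f x - g x) F (locally (a - b)).
Proof.
  intros Hf Hg.
  assert (Hng : filterlim (fun x => - g x) F (locally (- b))).
  { apply (filterlim_comp _ _ _ g Ropp _ _ _ Hg).
    exact (@filterlim_opp R_AbsRing R_NormedModule b). }
  apply (filterlim_comp_2 f (fun x => - g x) Rplus Hf Hng).
  exact (@filterlim_plus R_AbsRing R_NormedModule a (- b)).
Qed.

Lemma filterlim_Rpow (f : T -> R) a k :
  filterlim f F (locally a) -> filterlim (fun x => f x ^ k) F (locally (a ^ k)).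
Proof.
  intros Hf; induction k as [|k IH]; simpl.
  - apply filterlim_const.
  - now apply filterlim_Rmult.
Qed.

Lemma filterlim_Rmult_bounded_0 (f g : T -> R) M :
  filterlim f F (locally 0) -> F (fun x => Rabs (g x) <= M) ->
  filterlim (fun x => f x * g x) F (locally 0).
Proof.
  intros Hf Hg; apply filterlim_locally; intros eps.
  assert (HM : 0 < Rabs M + 1) by (pose proof (Rabs_pos M); lra).
  pose (e := mkposreal _ (Rdiv_lt_0_compat _ _ (cond_pos eps) HM)).
  eapply filter_imp; [| exact (filter_and _ _ (proj1 (filterlim_locally f 0) Hf e) Hg)].
  intros x [Hfx Hgx]; change (Rabs (f x * g x - 0) < eps).
  change (Rabs (f x - 0) < eps / (Rabs M + 1)) in Hfx.
  rewrite Rminus_0_r in *; rewrite Rabs_mult.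
  assert (Rabs (g x) <= Rabs M + 1) by (pose proof (Rle_abs M); lra).
  apply Rle_lt_trans with (Rabs (f x) * (Rabs M + 1));
    [apply Rmult_le_compat_l; auto using Rabs_pos |].
  apply (Rmult_lt_compat_r (Rabs M + 1)) in Hfx; auto.
  field_simplify in Hfx; lra.
Qed.

End FilterLimits.

Section ProperFilterLimits.
Context {F : (R -> Prop) -> Prop} {FF : ProperFilter F}.

Lemma filterlim_le_const (f : R -> R) c L :
  F (fun r => f r <= c) -> filterlim f F (locally L) -> L <= c.
Proof.
  intros Hle Hf.
  exact (filterlim_le (FF := Proper_StrongProper F FF) f (fun _ => c) L c Hle Hf (filterlim_const c)).
Qed.

Lemma filterlim_ge_const (f : R -> R) c L :
  F (fun r => c <= f r) -> filterlim f F (locally L) -> c <= L.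
Proof.
  intros Hge Hf.
  exact (filterlim_le (FF := Proper_StrongProper F FF) (fun _ => c) f c L Hge (filterlim_const c) Hf).
Qed.

Lemma filterlim_eventually_const (f : R -> R) c L :
  F (fun r => f r = c) -> filterlim f F (locally L) -> c = L.
Proof.
  intros Hc Hf.
  apply (filterlim_locally_unique (FF := Proper_StrongProper F FF) (fun _ => c)); [apply filterlim_const |].
  exact (filterlim_ext_loc f (fun _ => c) Hc Hf).
Qed.

End ProperFilterLimits.

Lemma at_right_open a b : a < b -> at_right a (fun r => a < r < b).
Proof.
  intros Hab; apply (filter_imp (fun r => r < b) (F := locally a)); [intros r Hr Har; lra |].
  exact (open_lt b a Hab).
Qed.

Lemma at_left_open a b : a < b -> at_left b (fun r => a < r < b).
Proof.
  intros Hab; apply (filter_imp (fun r => a < r) (F := locally b)); [intros r Hr Hrb; lra |].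
  exact (open_gt a b Hab).
Qed.

Lemma continuous_pos_near (f : R -> R) x :
  continuous f x -> 0 < f x -> locally x (fun t => 0 < f t).
Proof. intros Hf Hpos; exact (Hf (fun y => 0 < y) (open_gt 0 (f x) Hpos)). Qed.

Lemma locally_exists_left (P : R -> Prop) a x :
  a < x -> locally x P -> exists t, a < t < x /\ P t.
Proof.
  intros Hax HP.
  destruct (filter_ex (F := at_left x) _
    (filter_and _ _ (at_left_open a x Hax) (filter_le_within _ _ HP))) as [t Ht].
  now exists t.
Qed.

Lemma locally_exists_right (P : R -> Prop) x b :
  x < b -> locally x P -> exists t, x < t < b /\ P t.
Proof.
  intros Hxb HP.
  destruct (filter_ex (F := at_right x) _
    (filter_and _ _ (at_right_open x b Hxb) (filter_le_within _ _ HP))) as [t Ht].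
  now exists t.
Qed.

Lemma filterlim_id_at_right a : filterlim (fun r => r) (at_right a) (locally a).
Proof. eapply filterlim_filter_le_1; [apply filter_le_within | apply filterlim_id]. Qed.

Lemma filterlim_id_at_left a : filterlim (fun r => r) (at_left a) (locally a).
Proof. eapply filterlim_filter_le_1; [apply filter_le_within | apply filterlim_id]. Qed.

Lemma MVT_open (f df : R -> R) a b x y :
  (forall r, a < r < b -> is_derive f r (df r)) -> a < x < b -> a < y < b ->
  exists c, a < c < b /\ f y - f x = df c * (y - x).
Proof.
  intros Hf Hx Hy.
  assert (Hsub : forall r, Rmin x y <= r <= Rmax x y -> a < r < b).
  { intros r Hr; destruct (Rle_dec x y).
    - rewrite Rmin_left, Rmax_right in Hr; lra.
    - rewrite Rmin_right, Rmax_left in Hr; lra. }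
  destruct (MVT_gen f x y df) as [c [Hc Hfc]].
  - intros r Hr; apply Hf, Hsub; lra.
  - intros r Hr; apply continuity_pt_filterlim.
    apply (@ex_derive_continuous R_AbsRing R_NormedModule).
    exists (df r); apply Hf, Hsub; lra.
  - exists c; split; [apply Hsub; lra | exact Hfc].
Qed.

Lemma derive_zero_const_open (f : R -> R) a b :
  (forall r, a < r < b -> is_derive f r 0) ->
  forall x y, a < x < b -> a < y < b -> f x = f y.
Proof.
  intros Hf x y Hx Hy.
  destruct (MVT_open f (fun _ => 0) a b x y Hf Hx Hy) as [c [_ Hc]]; lra.
Qed.

Lemma derive_nonneg_incr_open (f df : R -> R) a b :
  (forall r, a < r < b -> is_derive f r (df r) /\ 0 <= df r) ->
  forall x y, a < x < b -> a < y < b -> x <= y -> f x <= f y.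
Proof.
  intros Hf x y Hx Hy Hxy.
  destruct (MVT_open f df a b x y (fun r Hr => proj1 (Hf r Hr)) Hx Hy) as [c [Hc Hfc]].
  pose proof (proj2 (Hf c Hc)); nra.
Qed.

Lemma derive_bounded_bounded_open (f df : R -> R) a b K :
  a < b -> (forall r, a < r < b -> is_derive f r (df r) /\ Rabs (df r) <= K) ->
  exists M, forall y, a < y < b -> Rabs (f y) <= M.
Proof.
  intros Hab Hf; exists (Rabs (f ((a + b) / 2)) + K * (b - a)); intros y Hy.
  destruct (MVT_open f df a b ((a + b) / 2) y (fun r Hr => proj1 (Hf r Hr)))
    as [c [Hc Hfc]]; [lra | exact Hy |].
  pose proof (proj2 (Hf c Hc)) as Hdf; pose proof (Rabs_pos (df c)).
  assert (Hdist : Rabs (y - (a + b) / 2) <= b - a) by (apply Rabs_le; lra).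
  pose proof (Rabs_pos (y - (a + b) / 2)).
  assert (Rabs (f y - f ((a + b) / 2)) <= K * (b - a)) by (rewrite Hfc, Rabs_mult; nra).
  pose proof (Rabs_triang_inv (f y) (f ((a + b) / 2))); lra.
Qed.

Lemma eventually_bounded_at_right (f : R -> R) a L :
  at_right a (fun r => ex_derive f r) -> filterlim (Derive f) (at_right a) (locally L) ->
  exists M, at_right a (fun r => Rabs (f r) <= M).
Proof.
  intros Hder Hlim.
  destruct (filter_and _ _ Hder (proj1 (filterlim_locally _ _) Hlim (mkposreal 1 Rlt_0_1)))
    as [d Hd].
  assert (Hnear : forall r, a < r < a + d -> ex_derive f r /\ Rabs (Derive f r - L) < 1).
  { intros r Hr; apply Hd; [change (Rabs (r - a) < d); apply Rabs_def1 |]; lra. }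
  destruct (derive_bounded_bounded_open f (Derive f) a (a + d) (Rabs L + 1)) as [M HM].
  - pose proof (cond_pos d); lra.
  - intros r Hr; destruct (Hnear r Hr) as [Hex Hclose]; split; [now apply Derive_correct |].
    pose proof (Rabs_triang_inv (Derive f r) L); lra.
  - exists M, d; intros r Hr Har; change (Rabs (r - a) < d) in Hr.
    apply HM; apply Rabs_def2 in Hr; lra.
Qed.

Lemma eventually_bounded_at_left (f : R -> R) b L :
  at_left b (fun r => ex_derive f r) -> filterlim (Derive f) (at_left b) (locally L) ->
  exists M, at_left b (fun r => Rabs (f r) <= M).
Proof.
  intros Hder Hlim.
  destruct (filter_and _ _ Hder (proj1 (filterlim_locally _ _) Hlim (mkposreal 1 Rlt_0_1)))
    as [d Hd].
  assert (Hnear : forall r, b - d < r < b -> ex_derive f r /\ Rabs (Derive f r - L) < 1).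
  { intros r Hr; apply Hd; [change (Rabs (r - b) < d); apply Rabs_def1 |]; lra. }
  destruct (derive_bounded_bounded_open f (Derive f) (b - d) b (Rabs L + 1)) as [M HM].
  - pose proof (cond_pos d); lra.
  - intros r Hr; destruct (Hnear r Hr) as [Hex Hclose]; split; [now apply Derive_correct |].
    pose proof (Rabs_triang_inv (Derive f r) L); lra.
  - exists M, d; intros r Hr Hrb; change (Rabs (r - b) < d) in Hr.
    apply HM; apply Rabs_def2 in Hr; lra.
Qed.

Lemma is_derive_local_min (f : R -> R) x l :
  is_derive f x l ->
  (exists delta, 0 < delta /\ forall y, Rabs (y - x) < delta -> f x <= f y) -> l = 0.
Proof.
  intros Hf [delta [Hdelta Hmin]].
  pose proof (proj1 (is_derive_Reals f x l) Hf) as Hl.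
  rewrite <- (derive_pt_eq_0 f x l (exist _ l Hl) Hl).
  apply (deriv_minimum f (x - delta) (x + delta)); try lra.
  intros y Hy1 Hy2; apply Hmin, Rabs_def1; lra.
Qed.

Lemma is_derive_local_min_inv (K : R) (p : R -> R) (x dp : R) :
  K <> 0 -> p x <> 0 -> is_derive p x dp ->
  (exists delta, 0 < delta /\ forall y, Rabs (y - x) < delta -> K / p x <= K / p y) ->
  dp = 0.
Proof.
  intros HK Hp Hdp Hmin.
  assert (Hinv : is_derive (fun y => K / p y) x (K * (- dp / p x ^ 2))).
  { apply (is_derive_scal (fun y => / p y)).
    exact (is_derive_inv p x dp Hdp Hp). }
  apply (is_derive_local_min _ _ _ Hinv) in Hmin.
  apply Rmult_integral in Hmin; destruct Hmin as [| Hq]; [contradiction |].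
  replace dp with (- (- dp / p x ^ 2) * p x ^ 2) by (field; exact Hp).
  rewrite Hq; ring.
Qed.

Definition radial_ode (n : nat) (V f : R -> R) (r : R) : Prop :=
  ex_derive f r /\ ex_derive_n f 2 r /\
  - Derive_n f 2 r - (INR n - 1) / r * Derive f r + V r * f r = 0.

(* With n = m + 1 the equation reads (r^m f')' = r^m V f, so r^m is the weight that
   makes the Wronskian constant and the energy monotone. *)
Definition wronskian (m : nat) (f h : R -> R) (r : R) : R :=
  r ^ m * (f r * Derive h r - Derive f r * h r).

Definition radial_energy (m : nat) (f : R -> R) (r : R) : R :=
  r ^ m * (f r * Derive f r).

Lemma wronskian_swap m f h r : wronskian m h f r = - wronskian m f h r.
Proof. unfold wronskian; ring. Qed.

Section RadialODE.
Variables (m : nat) (V : R -> R).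

Lemma radial_ode_derive2 f r :
  0 < r -> radial_ode (S m) V f r ->
  is_derive (Derive f) r (V r * f r - INR m / r * Derive f r).
Proof.
  intros Hr [_ [Hf2 Hode]]; change (ex_derive (Derive f) r) in Hf2.
  change (- Derive (Derive f) r - (INR (S m) - 1) / r * Derive f r + V r * f r = 0) in Hode.
  replace (INR (S m) - 1) with (INR m) in Hode by (rewrite S_INR; ring).
  replace (V r * f r - INR m / r * Derive f r) with (Derive (Derive f) r) by lra.
  now apply Derive_correct.
Qed.

Lemma is_derive_weighted (u : R -> R) r du :
  0 < r -> is_derive u r du ->
  is_derive (fun x => x ^ m * u x) r (r ^ m * (INR m / r * u r + du)).
Proof.
  intros Hr Hu.
  assert (Hpow := is_derive_pow (fun x => x) m r 1 (is_derive_id r)).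
  replace (r ^ m * (INR m / r * u r + du))
    with (INR m * 1 * r ^ Nat.pred m * u r + r ^ m * du).
  - exact (@is_derive_mult R_AbsRing (fun x => x ^ m) u r _ du Hpow Hu Rmult_comm).
  - destruct m as [|k]; simpl Nat.pred; [simpl; field | rewrite <- tech_pow_Rmult; field]; lra.
Qed.

Lemma wronskian_is_derive f h r :
  0 < r -> radial_ode (S m) V f r -> radial_ode (S m) V h r ->
  is_derive (wronskian m f h) r 0.
Proof.
  intros Hr Hf Hh.
  assert (Df := Derive_correct _ _ (proj1 Hf)).
  assert (Dh := Derive_correct _ _ (proj1 Hh)).
  unfold wronskian.
  replace 0 with (r ^ m * (INR m / r * (f r * Derive h r - Derive f r * h r)
    + ((Derive f r * Derive h r + f r * (V r * h r - INR m / r * Derive h r))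
       - ((V r * f r - INR m / r * Derive f r) * h r + Derive f r * Derive h r))))
    by (field; lra).
  apply (is_derive_weighted (fun x => f x * Derive h x - Derive f x * h x)); [exact Hr |].
  apply (@is_derive_minus R_AbsRing R_NormedModule);
    apply (@is_derive_mult R_AbsRing); auto using radial_ode_derive2, Rmult_comm.
Qed.

Lemma radial_energy_is_derive f r :
  0 < r -> radial_ode (S m) V f r ->
  is_derive (radial_energy m f) r (r ^ m * (Derive f r ^ 2 + V r * f r ^ 2)).
Proof.
  intros Hr Hf.
  assert (Df := Derive_correct _ _ (proj1 Hf)).
  replace (r ^ m * (Derive f r ^ 2 + V r * f r ^ 2)) with (r ^ m * (INR m / r * (f r * Derive f r)
    + (Derive f r * Derive f r + f r * (V r * f r - INR m / r * Derive f r))))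
    by (field; lra).
  apply (is_derive_weighted (fun x => f x * Derive f x)); [exact Hr |].
  apply (@is_derive_mult R_AbsRing); auto using radial_ode_derive2, Rmult_comm.
Qed.

End RadialODE.

Section WronskianLimits.
Context {F : (R -> Prop) -> Prop} {FF : Filter F}.

Lemma weighted_product_lim_0 m (f h : R -> R) p M :
  filterlim (fun r => r) F (locally p) -> filterlim (Derive h) F (locally 0) ->
  F (fun r => Rabs (f r) <= M) ->
  filterlim (fun r => r ^ m * (f r * Derive h r)) F (locally 0).
Proof.
  intros Hid Hh Hf.
  replace 0 with (p ^ m * 0) by ring.
  apply filterlim_Rmult; [now apply filterlim_Rpow |].
  eapply filterlim_ext; [| exact (filterlim_Rmult_bounded_0 (Derive h) f M Hh Hf)].
  intros r; simpl; ring.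
Qed.

Lemma wronskian_lim_0 m (f h : R -> R) p M :
  filterlim (fun r => r) F (locally p) ->
  filterlim (Derive f) F (locally 0) -> filterlim (Derive h) F (locally 0) ->
  F (fun r => Rabs (f r) <= M) -> F (fun r => Rabs (h r) <= M) ->
  filterlim (wronskian m f h) F (locally 0).
Proof.
  intros Hid Hf' Hh' Hf Hh.
  replace 0 with (0 - 0) by ring.
  eapply filterlim_ext; [| apply filterlim_Rminus;
    [exact (weighted_product_lim_0 m f h p M Hid Hh' Hf)
    | exact (weighted_product_lim_0 m h f p M Hid Hf' Hh)]].
  intros r; unfold wronskian; simpl; ring.
Qed.

Lemma wronskian_lim m (f h : R -> R) p f0 f1 h0 h1 :
  filterlim (fun r => r) F (locally p) ->
  filterlim f F (locally f0) -> filterlim (Derive f) F (locally f1) ->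
  filterlim h F (locally h0) -> filterlim (Derive h) F (locally h1) ->
  filterlim (wronskian m f h) F (locally (p ^ m * (f0 * h1 - f1 * h0))).
Proof.
  intros Hid Hf Hf' Hh Hh'.
  apply filterlim_Rmult; [now apply filterlim_Rpow |].
  apply filterlim_Rminus; now apply filterlim_Rmult.
Qed.

End WronskianLimits.

Lemma sphere_area_pos m : 0 < sphere_area (S m).
Proof.
  assert (Hpair : forall k, 0 < sphere_area (S k) /\ 0 < sphere_area (S (S k))).
  { induction k as [|k [IH1 IH2]]; [simpl; pose proof PI_RGT_0; lra |].
    split; [exact IH2 |].
    change (0 < 2 * PI / INR (S k) * sphere_area (S k)).
    pose proof PI_RGT_0; assert (0 < INR (S k)) by apply lt_0_INR, Nat.lt_0_succ.
    apply Rmult_lt_0_compat; [apply Rdiv_lt_0_compat |]; lra. }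
  apply Hpair.
Qed.

Section GreenFunction.
Variables (m : nat) (V : R -> R) (G : R -> R -> R).
Hypothesis HG : is_green_function (S m) V G.

Lemma green_continuous s r : 0 < s < 1 -> 0 < r < 1 -> continuous (fun x => G x s) r.
Proof. intros Hs Hr; exact (proj1 (HG s Hs) r Hr). Qed.

Lemma green_radial_ode s r :
  0 < s < 1 -> 0 < r < 1 -> r <> s -> radial_ode (S m) V (fun x => G x s) r.
Proof. intros Hs Hr Hrs; exact (proj1 (proj2 (HG s Hs)) r Hr Hrs). Qed.

Lemma green_derive_lim_0 s :
  0 < s < 1 -> filterlim (Derive (fun x => G x s)) (at_right 0) (locally 0).
Proof. intros Hs; apply (HG s Hs). Qed.

Lemma green_derive_lim_1 s :
  0 < s < 1 -> filterlim (Derive (fun x => G x s)) (at_left 1) (locally 0).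
Proof. intros Hs; apply (HG s Hs). Qed.

Lemma green_jump s : 0 < s < 1 -> exists a b,
  filterlim (Derive (fun x => G x s)) (at_left s) (locally a) /\
  filterlim (Derive (fun x => G x s)) (at_right s) (locally b) /\ a - b = 1.
Proof. intros Hs; apply (HG s Hs). Qed.

Lemma green_is_derive s r : 0 < s < 1 -> 0 < r < 1 -> r <> s ->
  is_derive (fun x => G x s) r (Derive (fun x => G x s) r).
Proof. intros Hs Hr Hrs; apply Derive_correct, (green_radial_ode s r Hs Hr Hrs). Qed.

Lemma green_derive_continuous s r : 0 < s < 1 -> 0 < r < 1 -> r <> s ->
  continuous (Derive (fun x => G x s)) r.
Proof.
  intros Hs Hr Hrs; apply (@ex_derive_continuous R_AbsRing R_NormedModule).
  exact (proj1 (proj2 (green_radial_ode s r Hs Hr Hrs))).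
Qed.

Lemma green_bounded_near_0 s : 0 < s < 1 -> exists M, at_right 0 (fun r => Rabs (G r s) <= M).
Proof.
  intros Hs; apply (eventually_bounded_at_right (fun x => G x s) 0 0);
    [| exact (green_derive_lim_0 s Hs)].
  eapply filter_imp; [| exact (at_right_open 0 s (proj1 Hs))].
  intros r Hr; apply (green_radial_ode s r Hs); lra.
Qed.

Lemma green_bounded_near_1 s : 0 < s < 1 -> exists M, at_left 1 (fun r => Rabs (G r s) <= M).
Proof.
  intros Hs; apply (eventually_bounded_at_left (fun x => G x s) 1 0);
    [| exact (green_derive_lim_1 s Hs)].
  eapply filter_imp; [| exact (at_left_open s 1 (proj2 Hs))].
  intros r Hr; apply (green_radial_ode s r Hs); lra.
Qed.

Lemma green_wronskian_const s1 s2 a b :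
  0 < s1 < 1 -> 0 < s2 < 1 -> 0 <= a -> b <= 1 -> ~ (a < s1 < b) -> ~ (a < s2 < b) ->
  forall x y, a < x < b -> a < y < b ->
  wronskian m (fun r => G r s1) (fun r => G r s2) x =
  wronskian m (fun r => G r s1) (fun r => G r s2) y.
Proof.
  intros H1 H2 Ha Hb N1 N2; apply derive_zero_const_open; intros r Hr.
  apply (wronskian_is_derive m V); [lra | apply green_radial_ode ..]; try lra;
    intros ->; tauto.
Qed.

Lemma green_wronskian_zero_near_0 s1 s2 r :
  0 < s1 < 1 -> 0 < s2 < 1 -> 0 < r -> r < s1 -> r < s2 ->
  wronskian m (fun x => G x s1) (fun x => G x s2) r = 0.
Proof.
  intros H1 H2 Hr R1 R2.
  destruct (green_bounded_near_0 s1 H1) as [M1 B1], (green_bounded_near_0 s2 H2) as [M2 B2].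
  pose (b := Rmin s1 s2); assert (b <= s1) by apply Rmin_l; assert (b <= s2) by apply Rmin_r.
  assert (r < b) by (apply Rmin_glb_lt; lra).
  apply (filterlim_eventually_const (F := at_right 0)
    (wronskian m (fun x => G x s1) (fun x => G x s2))).
  - eapply filter_imp; [| exact (at_right_open 0 b ltac:(lra))].
    intros y Hy; apply (green_wronskian_const s1 s2 0 b); lra.
  - apply (wronskian_lim_0 m _ _ 0 (Rmax M1 M2)); auto using filterlim_id_at_right,
      green_derive_lim_0.
    + eapply filter_imp; [| exact B1]; intros y Hy; pose proof (Rmax_l M1 M2); lra.
    + eapply filter_imp; [| exact B2]; intros y Hy; pose proof (Rmax_r M1 M2); lra.
Qed.

Lemma green_wronskian_zero_near_1 s1 s2 r :
  0 < s1 < 1 -> 0 < s2 < 1 -> r < 1 -> s1 < r -> s2 < r ->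
  wronskian m (fun x => G x s1) (fun x => G x s2) r = 0.
Proof.
  intros H1 H2 Hr R1 R2.
  destruct (green_bounded_near_1 s1 H1) as [M1 B1], (green_bounded_near_1 s2 H2) as [M2 B2].
  pose (a := Rmax s1 s2); assert (s1 <= a) by apply Rmax_l; assert (s2 <= a) by apply Rmax_r.
  assert (a < r) by (apply Rmax_lub_lt; lra).
  apply (filterlim_eventually_const (F := at_left 1)
    (wronskian m (fun x => G x s1) (fun x => G x s2))).
  - eapply filter_imp; [| exact (at_left_open a 1 ltac:(lra))].
    intros y Hy; apply (green_wronskian_const s1 s2 a 1); lra.
  - apply (wronskian_lim_0 m _ _ 1 (Rmax M1 M2)); auto using filterlim_id_at_left,
      green_derive_lim_1.
    + eapply filter_imp; [| exact B1]; intros y Hy; pose proof (Rmax_l M1 M2); lra.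
    + eapply filter_imp; [| exact B2]; intros y Hy; pose proof (Rmax_r M1 M2); lra.
Qed.

Lemma green_wronskian_lim_pole {F : (R -> Prop) -> Prop} {FF : Filter F} s t c :
  0 < s < 1 -> 0 < t < 1 -> s <> t -> filter_le F (locally s) ->
  filterlim (Derive (fun x => G x s)) F (locally c) ->
  filterlim (wronskian m (fun x => G x s) (fun x => G x t)) F
    (locally (s ^ m * (G s s * Derive (fun x => G x t) s - c * G s t))).
Proof.
  intros Hs Ht Hst Hle Hc.
  apply wronskian_lim; [| | exact Hc | |]; apply (filterlim_filter_le_1 _ Hle).
  - apply filterlim_id.
  - now apply green_continuous.
  - now apply green_continuous.
  - now apply green_derive_continuous.
Qed.

Lemma green_diag_derive_left s t a : 0 < s -> s < t -> t < 1 ->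
  filterlim (Derive (fun x => G x s)) (at_left s) (locally a) ->
  G s s * Derive (fun x => G x t) s = a * G s t.
Proof.
  intros Hs Hst Ht Ha.
  assert (Hlim := green_wronskian_lim_pole (F := at_left s) s t a ltac:(lra) ltac:(lra)
    ltac:(lra) (filter_le_within _) Ha).
  apply (filterlim_eventually_const (F := at_left s) _ 0) in Hlim.
  - assert (0 < s ^ m) by (apply pow_lt; lra).
    assert (Hz : G s s * Derive (fun x => G x t) s - a * G s t = 0) by nra; lra.
  - eapply filter_imp; [| exact (at_left_open 0 s Hs)].
    intros r Hr; apply green_wronskian_zero_near_0; lra.
Qed.

Lemma green_diag_derive_right s t b : 0 < t -> t < s -> s < 1 ->
  filterlim (Derive (fun x => G x s)) (at_right s) (locally b) ->
  G s s * Derive (fun x => G x t) s = b * G s t.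
Proof.
  intros Ht Hts Hs Hb.
  assert (Hlim := green_wronskian_lim_pole (F := at_right s) s t b ltac:(lra) ltac:(lra)
    ltac:(lra) (filter_le_within _) Hb).
  apply (filterlim_eventually_const (F := at_right s) _ 0) in Hlim.
  - assert (0 < s ^ m) by (apply pow_lt; lra).
    assert (Hz : G s s * Derive (fun x => G x t) s - b * G s t = 0) by nra; lra.
  - eapply filter_imp; [| exact (at_right_open s 1 Hs)].
    intros r Hr; apply green_wronskian_zero_near_1; lra.
Qed.

Lemma green_wronskian_right_of_pole s t r : 0 < s -> s < r -> r < t -> t < 1 ->
  wronskian m (fun x => G x s) (fun x => G x t) r = s ^ m * G s t.
Proof.
  intros Hs Hsr Hrt Ht.
  destruct (green_jump s ltac:(lra)) as [a [b [Ha [Hb Hab]]]].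
  assert (Hlim := green_wronskian_lim_pole (F := at_right s) s t b ltac:(lra) ltac:(lra)
    ltac:(lra) (filter_le_within _) Hb).
  apply (filterlim_eventually_const (F := at_right s) _
    (wronskian m (fun x => G x s) (fun x => G x t) r)) in Hlim.
  - rewrite Hlim, (green_diag_derive_left s t a) by (auto; lra).
    replace a with (b + 1) by lra; ring.
  - eapply filter_imp; [| exact (at_right_open s t ltac:(lra))].
    intros y Hy; apply (green_wronskian_const s t s t); lra.
Qed.

Lemma green_wronskian_left_of_pole s t r : 0 < t -> t < r -> r < s -> s < 1 ->
  wronskian m (fun x => G x s) (fun x => G x t) r = - (s ^ m * G s t).
Proof.
  intros Ht Htr Hrs Hs.
  destruct (green_jump s ltac:(lra)) as [a [b [Ha [Hb Hab]]]].
  assert (Hlim := green_wronskian_lim_pole (F := at_left s) s t a ltac:(lra) ltac:(lra)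
    ltac:(lra) (filter_le_within _) Ha).
  apply (filterlim_eventually_const (F := at_left s) _
    (wronskian m (fun x => G x s) (fun x => G x t) r)) in Hlim.
  - rewrite Hlim, (green_diag_derive_right s t b) by (auto; lra).
    replace a with (b + 1) by lra; ring.
  - eapply filter_imp; [| exact (at_left_open t s ltac:(lra))].
    intros y Hy; apply (green_wronskian_const s t t s); lra.
Qed.

Lemma green_symmetric x y : 0 < x -> x < y -> y < 1 -> x ^ m * G x y = y ^ m * G y x.
Proof.
  intros Hx Hxy Hy.
  rewrite <- (green_wronskian_right_of_pole x y ((x + y) / 2)) by lra.
  rewrite wronskian_swap, (green_wronskian_left_of_pole y x) by lra; ring.
Qed.

Hypothesis HV : forall x, 0 <= x <= 1 -> 0 <= V x.

Lemma green_energy_derive_nonneg s r :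
  0 < r < 1 -> 0 <= r ^ m * (Derive (fun x => G x s) r ^ 2 + V r * G r s ^ 2).
Proof.
  intros Hr; apply Rmult_le_pos; [apply pow_le; lra |].
  assert (0 <= V r) by (apply HV; lra).
  pose proof (pow2_ge_0 (Derive (fun x => G x s) r)); pose proof (pow2_ge_0 (G r s)); nra.
Qed.

Lemma green_energy_incr s p q :
  0 < s < 1 -> 0 <= p -> q <= 1 -> ~ (p < s < q) ->
  forall x y, p < x < q -> p < y < q -> x <= y ->
  radial_energy m (fun r => G r s) x <= radial_energy m (fun r => G r s) y.
Proof.
  intros Hs Hp Hq Hns.
  apply (derive_nonneg_incr_open _
    (fun r => r ^ m * (Derive (fun x => G x s) r ^ 2 + V r * G r s ^ 2))).
  intros r Hr; split; [| apply green_energy_derive_nonneg; lra].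
  apply (radial_energy_is_derive m V (fun x => G x s)); [| apply green_radial_ode]; lra.
Qed.

Lemma green_energy_bounds s a b : 0 < s < 1 ->
  filterlim (Derive (fun x => G x s)) (at_left s) (locally a) ->
  filterlim (Derive (fun x => G x s)) (at_right s) (locally b) ->
  (forall y, 0 < y < s -> 0 <= radial_energy m (fun r => G r s) y <= s ^ m * (G s s * a)) /\
  (forall y, s < y < 1 -> s ^ m * (G s s * b) <= radial_energy m (fun r => G r s) y <= 0).
Proof.
  intros Hs Ha Hb; set (E := radial_energy m (fun r => G r s)).
  destruct (green_bounded_near_0 s Hs) as [M0 B0], (green_bounded_near_1 s Hs) as [M1 B1].
  assert (L0 : filterlim E (at_right 0) (locally 0)).
  { apply (weighted_product_lim_0 m _ _ 0 M0); auto using filterlim_id_at_right,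
      green_derive_lim_0. }
  assert (L1 : filterlim E (at_left 1) (locally 0)).
  { apply (weighted_product_lim_0 m _ _ 1 M1); auto using filterlim_id_at_left,
      green_derive_lim_1. }
  assert (Lsl : filterlim E (at_left s) (locally (s ^ m * (G s s * a)))).
  { apply filterlim_Rmult; [apply filterlim_Rpow, filterlim_id_at_left |].
    apply filterlim_Rmult; [| exact Ha].
    apply (filterlim_filter_le_1 _ (filter_le_within _)), green_continuous; lra. }
  assert (Lsr : filterlim E (at_right s) (locally (s ^ m * (G s s * b)))).
  { apply filterlim_Rmult; [apply filterlim_Rpow, filterlim_id_at_right |].
    apply filterlim_Rmult; [| exact Hb].
    apply (filterlim_filter_le_1 _ (filter_le_within _)), green_continuous; lra. }
  split; intros y Hy; split.
  - apply (filterlim_le_const (F := at_right 0) E _ _); [| exact L0].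
    eapply filter_imp; [| exact (at_right_open 0 y ltac:(lra))].
    intros r Hr; apply (green_energy_incr s 0 s); lra.
  - apply (filterlim_ge_const (F := at_left s) E _ _); [| exact Lsl].
    eapply filter_imp; [| exact (at_left_open y s ltac:(lra))].
    intros r Hr; apply (green_energy_incr s 0 s); lra.
  - apply (filterlim_le_const (F := at_right s) E _ _); [| exact Lsr].
    eapply filter_imp; [| exact (at_right_open s y ltac:(lra))].
    intros r Hr; apply (green_energy_incr s s 1); lra.
  - apply (filterlim_ge_const (F := at_left 1) E _ _); [| exact L1].
    eapply filter_imp; [| exact (at_left_open y 1 ltac:(lra))].
    intros r Hr; apply (green_energy_incr s s 1); lra.
Qed.

Lemma green_derive_zero_of_energy_zero s p q :
  0 < s < 1 -> 0 <= p -> q <= 1 -> ~ (p < s < q) ->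
  (forall r, p < r < q -> radial_energy m (fun x => G x s) r = 0) ->
  forall y, p < y < q -> Derive (fun x => G x s) y = 0.
Proof.
  intros Hs Hp Hq Hns HE y Hy.
  assert (HdE := radial_energy_is_derive m V (fun x => G x s) y ltac:(lra)
    (green_radial_ode s y Hs ltac:(lra) ltac:(intros ->; tauto))).
  apply is_derive_local_min in HdE.
  - assert (0 < y ^ m) by (apply pow_lt; lra).
    destruct (Rmult_integral _ _ HdE) as [| Hsum]; [lra |].
    assert (0 <= V y * G y s ^ 2) by (apply Rmult_le_pos; [apply HV; lra | apply pow2_ge_0]).
    pose proof (pow2_ge_0 (Derive (fun x => G x s) y)).
    destruct (Req_dec (Derive (fun x => G x s) y) 0) as [| Hne]; [assumption |].
    apply (pow_nonzero _ 2) in Hne; lra.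
  - exists (Rmin (y - p) (q - y)); split; [apply Rmin_glb_lt; lra |].
    intros z Hz; apply Rabs_def2 in Hz.
    pose proof (Rmin_l (y - p) (q - y)); pose proof (Rmin_r (y - p) (q - y)).
    rewrite !HE; lra.
Qed.

Lemma green_diag_pos s : 0 < s < 1 -> 0 < G s s.
Proof.
  intros Hs; destruct (green_jump s Hs) as [a [b [Ha [Hb Hab]]]].
  destruct (green_energy_bounds s a b Hs Ha Hb) as [Eleft Eright].
  assert (0 < s ^ m) by (apply pow_lt; lra).
  assert (Ea := Eleft (s / 2) ltac:(lra)); assert (Eb := Eright ((s + 1) / 2) ltac:(lra)).
  assert (Hnonneg : 0 <= G s s) by nra.
  destruct (Rle_lt_or_eq_dec 0 (G s s) Hnonneg) as [| Hzero]; [assumption | exfalso].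
  rewrite <- Hzero in Eleft, Eright.
  assert (a = 0).
  { apply (filterlim_eventually_const (F := at_left s) _ 0) in Ha; [lra |].
    eapply filter_imp; [| exact (at_left_open 0 s ltac:(lra))].
    apply (green_derive_zero_of_energy_zero s 0 s); try lra.
    intros r Hr; specialize (Eleft r Hr); lra. }
  assert (b = 0).
  { apply (filterlim_eventually_const (F := at_right s) _ 0) in Hb; [lra |].
    eapply filter_imp; [| exact (at_right_open s 1 ltac:(lra))].
    apply (green_derive_zero_of_energy_zero s s 1); try lra.
    intros r Hr; specialize (Eright r Hr); lra. }
  lra.
Qed.

Lemma green_poles_around s : 0 < s < 1 ->
  exists t1 t2, 0 < t1 < s /\ s < t2 < 1 /\ 0 < G t2 t1.
Proof.
  intros Hs.
  destruct (locally_exists_left _ 0 s (proj1 Hs)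
    (continuous_pos_near _ s (green_continuous s s Hs Hs) (green_diag_pos s Hs)))
    as [t1 [Ht1 Hpos1]].
  assert (Hpos : 0 < G s t1).
  { assert (0 < t1 ^ m) by (apply pow_lt; lra); assert (0 < s ^ m) by (apply pow_lt; lra).
    pose proof (green_symmetric t1 s ltac:(lra) ltac:(lra) ltac:(lra)); nra. }
  destruct (locally_exists_right _ s 1 (proj2 Hs)
    (continuous_pos_near _ s (green_continuous t1 s ltac:(lra) Hs) Hpos))
    as [t2 [Ht2 Hpos2]].
  now exists t1, t2.
Qed.

Lemma green_diag_factor t1 t2 s : 0 < t1 -> t1 < s -> s < t2 -> t2 < 1 ->
  G s s * (t2 ^ m * G t2 t1) = s ^ m * (G s t2 * G s t1).
Proof.
  intros H1 H1s Hs2 H2.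
  destruct (green_jump s ltac:(lra)) as [a [b [Ha [Hb Hab]]]].
  assert (Hw := wronskian_swap m (fun x => G x t2) (fun x => G x t1) s).
  rewrite (green_wronskian_left_of_pole t2 t1 s) in Hw by lra.
  replace (t2 ^ m * G t2 t1) with (wronskian m (fun x => G x t1) (fun x => G x t2) s) by lra.
  unfold wronskian.
  replace (G s s * (s ^ m * (G s t1 * Derive (fun x => G x t2) s
      - Derive (fun x => G x t1) s * G s t2)))
    with (s ^ m * (G s t1 * (G s s * Derive (fun x => G x t2) s)
      - (G s s * Derive (fun x => G x t1) s) * G s t2)) by ring.
  rewrite (green_diag_derive_left s t2 a), (green_diag_derive_right s t1 b) by (auto; lra).
  replace a with (b + 1) by lra; ring.
Qed.

Lemma green_F_of t1 t2 s : 0 < t1 -> t1 < s -> s < t2 -> t2 < 1 -> 0 < G t2 t1 ->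
  0 < G s t2 * G s t1 /\
  F_of (S m) G s = sphere_area (S m) * (t2 ^ m * G t2 t1) / (G s t2 * G s t1).
Proof.
  intros H1 H1s Hs2 H2 HC.
  assert (Hfac := green_diag_factor t1 t2 s H1 H1s Hs2 H2).
  assert (Hd := green_diag_pos s ltac:(lra)).
  assert (0 < s ^ m) by (apply pow_lt; lra).
  assert (0 < t2 ^ m) by (apply pow_lt; lra).
  assert (0 < t2 ^ m * G t2 t1) by (apply Rmult_lt_0_compat; lra).
  assert (Hprod : 0 < G s t2 * G s t1).
  { apply (Rmult_lt_reg_l (s ^ m)); [assumption |]; rewrite <- Hfac; nra. }
  split; [exact Hprod |].
  unfold F_of; replace (S m - 1)%nat with m by lia.
  replace (G s s) with (s ^ m * (G s t2 * G s t1) / (t2 ^ m * G t2 t1))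
    by (rewrite <- Hfac; field; lra).
  field; repeat split; intros Hz; rewrite Hz in *; lra.
Qed.

Lemma green_product_derive t1 t2 s a b : 0 < t1 -> t1 < s -> s < t2 -> t2 < 1 ->
  filterlim (Derive (fun x => G x s)) (at_left s) (locally a) ->
  filterlim (Derive (fun x => G x s)) (at_right s) (locally b) ->
  G s s * (Derive (fun x => G x t2) s * G s t1 + G s t2 * Derive (fun x => G x t1) s)
  = (a + b) * (G s t2 * G s t1).
Proof.
  intros H1 H1s Hs2 H2 Ha Hb.
  rewrite Rmult_plus_distr_l, <- Rmult_assoc, (Rmult_comm (G s t2)), <- Rmult_assoc.
  rewrite (green_diag_derive_left s t2 a), (green_diag_derive_right s t1 b) by (auto; lra); ring.
Qed.

Lemma green_product_critical t1 t2 r : 0 < t1 < r -> r < t2 < 1 -> 0 < G t2 t1 ->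
  local_min_on_01 (F_of (S m) G) r ->
  Derive (fun x => G x t2) r * G r t1 + G r t2 * Derive (fun x => G x t1) r = 0.
Proof.
  intros Ht1 Ht2 HC [Hr [delta [Hdelta Hloc]]].
  assert (HF : forall s, t1 < s < t2 -> 0 < G s t2 * G s t1 /\
    F_of (S m) G s = sphere_area (S m) * (t2 ^ m * G t2 t1) / (G s t2 * G s t1))
    by (intros s Hs; apply green_F_of; lra).
  apply (is_derive_local_min_inv (sphere_area (S m) * (t2 ^ m * G t2 t1))
    (fun x => G x t2 * G x t1) r).
  - apply Rgt_not_eq, Rmult_lt_0_compat; [apply sphere_area_pos |].
    apply Rmult_lt_0_compat; [apply pow_lt |]; lra.
  - pose proof (proj1 (HF r ltac:(lra))); lra.
  - apply (@is_derive_mult R_AbsRing (fun x => G x t2) (fun x => G x t1));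
      [apply green_is_derive .. | exact Rmult_comm]; lra.
  - pose (d := Rmin delta (Rmin (r - t1) (t2 - r))).
    assert (d <= delta /\ d <= r - t1 /\ d <= t2 - r) as Hd.
    { unfold d; pose proof (Rmin_l (r - t1) (t2 - r)); pose proof (Rmin_r (r - t1) (t2 - r)).
      pose proof (Rmin_l delta (Rmin (r - t1) (t2 - r)));
        pose proof (Rmin_r delta (Rmin (r - t1) (t2 - r))); lra. }
    exists d; split; [unfold d; repeat apply Rmin_glb_lt; lra |].
    intros y Hy; apply Rabs_def2 in Hy.
    rewrite <- (proj2 (HF r ltac:(lra))), <- (proj2 (HF y ltac:(lra))).
    apply Hloc; [lra | apply Rabs_def1; lra].
Qed.
End GreenFunction.


Theorem proposition4p3 (n : nat) (V : R -> R) (G : R -> R -> R) (rbar : R) :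
  (2 <= n)%nat ->
  smooth V ->
  (forall x, 0 <= x <= 1 -> 0 <= V x) ->
  (exists x, 0 <= x <= 1 /\ V x <> 0) ->
  is_green_function n V G ->
  local_min_on_01 (F_of n G) rbar ->
  filterlim (Derive (fun r => G r rbar)) (at_left rbar) (locally (1 / 2)) /\
  filterlim (Derive (fun r => G r rbar)) (at_right rbar) (locally (- (1 / 2))).
Proof.
  intros Hn _ HV _ HG Hmin.
  destruct n as [|m]; [lia |].
  assert (Hr := proj1 Hmin).
  destruct (green_poles_around m V G HG HV rbar Hr) as [t1 [t2 [Ht1 [Ht2 HC]]]].
  destruct (green_jump m V G HG rbar Hr) as [a [b [Ha [Hb Hab]]]].
  assert (Hsum := green_product_derive m V G HG t1 t2 rbar a b ltac:(lra) ltac:(lra)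
    ltac:(lra) ltac:(lra) Ha Hb).
  rewrite (green_product_critical m V G HG HV t1 t2 rbar), Rmult_0_r in Hsum by assumption.
  assert (0 < G rbar t2 * G rbar t1) by (apply (green_F_of m V G HG HV t1 t2); lra).
  assert (a + b = 0) by (symmetry in Hsum; apply Rmult_integral in Hsum; destruct Hsum; lra).
  assert (a = 1 / 2) by lra; assert (b = - (1 / 2)) by lra; subst a b; now split.
Qed.
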